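(* For integers $r\le s<0$, the universal algebraic prolongation of $\mathbb K\delta_{rs}$ in $\mathfrak{gl}(V_{rs})$ is isomorphic to $\mathfrak{gl}_2$; its largest ideal contained in the nonnegative-degree part is $\mathbb K\,\mathrm{Id}$.
   Context: $V_{rs}=\bigoplus_{i=r}^sE_i$ with $\dim E_i=1$ in degree $i$; $\delta_{rs}$ maps $E_i$ onto $E_{i-1}$ for $r<i\le s$ and $E_r$ to $0$. $\mathfrak{gl}(V_{rs})$ is graded by $\mathfrak{gl}(V)_k=\bigoplus_i\operatorname{Hom}(E_i,E_{i+k})$. Universal algebraic prolongation of a line $\mathfrak m\subset\mathfrak g_{-1}$: $\mathfrak u_{-1}=\mathfrak m$, $\mathfrak u_k=\{X\in\mathfrak g_k:[X,\delta]\in\mathfrak u_{k-1}\ \forall\delta\in\mathfrak m\}$ ($k\ge0$), $\mathfrak u(\mathfrak m)=\bigoplus_{k\ge-1}\mathfrak u_k$. *)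

From HB Require Import structures.
From mathcomp Require Import all_boot all_order all_algebra.
Set Implicit Arguments. Unset Strict Implicit. Unset Printing Implicit Defensive.
Import Order.TTheory GRing.Theory Num.Theory.
Local Open Scope ring_scope.

(* V_{rs} = E_r + ... + E_s, dim E_i = 1.  We take n := |s - r| and index the
   basis vectors e_0 .. e_n by 'I_n.+1; basis vector e_a spans E_{r+a}.
   Endomorphisms are matrices acting on column vectors: X e_b = sum_a X a b e_a. *)
Definition dimV (r s : int) : nat := `|s - r|%N.

Definition Vdeg (r : int) (n : nat) (a : 'I_n) : int := r + (a : nat)%:Z.

Definition glM (K : fieldType) (r s : int) := 'M[K]_((dimV r s).+1).

Definition lbr (K : fieldType) (m : nat) (X Y : 'M[K]_m) : 'M[K]_m :=
  X *m Y - Y *m X.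

(* delta_{rs}: e_b |-> e_{b-1} (E_i onto E_{i-1}), e_0 |-> 0 (E_r to 0). *)
Definition delta_rs (K : fieldType) (r s : int) : glM K r s :=
  \matrix_(a, b) (((a : nat).+1 == (b : nat))%:R).

(* degree-k homogeneous component of X in gl(V) = sum_i Hom(E_i, E_{i+k}) *)
Definition gcomp (K : fieldType) (r s : int) (k : int) (X : glM K r s)
  : glM K r s :=
  \matrix_(a, b) (if Vdeg r a == Vdeg r b + k then X a b else 0).

Definition ghom (K : fieldType) (r s : int) (k : int) (X : glM K r s) : Prop :=
  forall a b, Vdeg r a != Vdeg r b + k -> X a b = 0.

Definition mline (K : fieldType) (r s : int) (X : glM K r s) : Prop :=
  exists c : K, X = c *: delta_rs K r s.

Fixpoint upos (K : fieldType) (r s : int) (k : nat) (X : glM K r s) : Prop :=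
  match k with
  | 0%N => ghom 0 X /\ forall D, mline D -> mline (lbr X D)
  | k'.+1 => ghom (k'.+1)%:Z X /\ forall D, mline D -> upos k' (lbr X D)
  end.

(* u_k for all integers k: u_{-1} = m, u_k = 0 for k < -1 *)
Definition uk (K : fieldType) (r s : int) (k : int) (X : glM K r s) : Prop :=
  match k with
  | Posz k' => upos k' X
  | Negz 0 => mline X
  | Negz _.+1 => X = 0
  end.

Definition inU (K : fieldType) (r s : int) (X : glM K r s) : Prop :=
  forall k : int, uk k (gcomp k X).

Definition inUnonneg (K : fieldType) (r s : int) (X : glM K r s) : Prop :=
  inU X /\ forall k : int, k < 0 -> gcomp k X = 0.

Definition is_u_ideal (K : fieldType) (r s : int) (I : glM K r s -> Prop) : Prop :=
  [/\ forall X, I X -> inU X,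
      I 0,
      forall (c : K) X Y, I X -> I Y -> I (c *: X + Y)
    & forall X Y, inU X -> I Y -> I (lbr X Y)].

Definition scalarsId (K : fieldType) (r s : int) (X : glM K r s) : Prop :=
  exists c : K, X = c%:M.

From HB Require Import structures.
From mathcomp Require Import all_boot all_order all_algebra.
From mathcomp Require Import zify ring.
Import Order.TTheory GRing.Theory Num.Theory.
Local Open Scope ring_scope.
Set Implicit Arguments. Unset Strict Implicit. Unset Printing Implicit Defensive.

(* Put n = s - r > 0 and index the basis by 0..n, so that delta is the shift
   e_j |-> e_{j-1}, of degree -1.  Let gl_2 act on the binary forms of degree n:
   the matrix units e11, e22, e12, e21 act by rho11 = diag(i), rho22 = diag(n-i),
   rho12 (e_j |-> (j+1)(n-j) e_{j+1}, degree 1) and delta.  Since rho11 and rho22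
   act on gl(V)_k by k and -k, and [rho12, delta] = rho11 - rho22, the map rho is
   a Lie algebra morphism gl_2 -> gl(V); it is injective and lands in u(m).

   Conversely, in characteristic 0, we compute u(m) degree by degree:
   u_0 = span(rho11, rho22), since ad delta acts on diagonals as a difference
   operator; u_1 = K rho12, using tr [X, delta] = 0 and the fact that positive
   degree elements of the centralizer of delta vanish; u_k = 0 for k >= 2, starting
   from tr ([X, delta] delta) = 0 with tr (rho12 delta) != 0.  Hence u(m) = rho(gl_2).
   Finally, an ideal inside the nonnegative part has no delta-component; bracketing
   twice with delta then forces its elements to be rho of scalars, i.e. in K Id. *)

Section Bracket.
Variables (K : fieldType) (m : nat).
Implicit Types (X Y Z : 'M[K]_m) (c : K).

Lemma mxBE X Y i j : (X - Y) i j = X i j - Y i j.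
Proof. by rewrite !mxE. Qed.

Lemma lbrDl X Y Z : lbr (X + Y) Z = lbr X Z + lbr Y Z.
Proof. by rewrite /lbr mulmxDl mulmxDr opprD addrACA. Qed.

Lemma lbrDr X Y Z : lbr X (Y + Z) = lbr X Y + lbr X Z.
Proof. by rewrite /lbr mulmxDl mulmxDr opprD addrACA. Qed.

Lemma lbrZl c X Y : lbr (c *: X) Y = c *: lbr X Y.
Proof. by rewrite /lbr -scalemxAl -scalemxAr scalerBr. Qed.

Lemma lbrZr c X Y : lbr X (c *: Y) = c *: lbr X Y.
Proof. by rewrite /lbr -scalemxAl -scalemxAr scalerBr. Qed.

Lemma lbr0l X : lbr 0 X = 0.
Proof. by rewrite /lbr mul0mx mulmx0 subrr. Qed.

Lemma lbrxx X : lbr X X = 0.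
Proof. exact: subrr. Qed.

Lemma lbrC X Y : lbr Y X = - lbr X Y.
Proof. by rewrite /lbr opprB. Qed.

Lemma lbr_scalar c X : lbr c%:M X = 0.
Proof. by rewrite /lbr mul_scalar_mx mul_mx_scalar subrr. Qed.

(* Commutators are traceless; more generally tr([X,Y] Y) = 0.  These two
   invariances are what pins down the degree 1 and degree 2 parts of u(m). *)
Lemma mxtrace_lbr X Y : \tr (lbr X Y) = 0.
Proof. by rewrite /lbr raddfB /= mxtrace_mulC subrr. Qed.

Lemma mxtrace_lbr_mulr X Y : \tr (lbr X Y *m Y) = 0.
Proof.
by rewrite /lbr mulmxBl raddfB /= -[Y *m X *m Y]mulmxA mxtrace_mulC subrr.
Qed.

End Bracket.

Section TwoByTwo.
Variable K : fieldType.
Implicit Types A B : 'M[K]_2.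

Lemma ord2P (i : 'I_2) : i = 0 \/ i = 1.
Proof. by case: i => [[|[|m]] hm]; [left | right | by []]; apply: val_inj. Qed.

Lemma lbr2_entry A B i j :
  lbr A B i j = A i 0 * B 0 j + A i 1 * B 1 j - (B i 0 * A 0 j + B i 1 * A 1 j).
Proof.
rewrite mxBE !mxE !big_ord_recl !big_ord0 !addr0.
by rewrite (_ : lift ord0 ord0 = 1 :> 'I_2); last exact: val_inj.
Qed.

Lemma lbr_e21 B : let e := delta_mx 1 0 : 'M[K]_2 in
  [/\ lbr e B 1 0 = B 0 0 - B 1 1, lbr e B 0 0 = - B 0 1 & lbr e B 1 1 = B 0 1].
Proof. by split; rewrite lbr2_entry !mxE /=; ring. Qed.

End TwoByTwo.

Section Prolongation.
Variables (K : fieldType) (r s : int).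
Local Notation n := (dimV r s).
Local Notation gl := (glM K r s).
Local Notation D := (delta_rs K r s).
Implicit Types (X Y : gl) (c : K).

(* Entries of X indexed by naturals, extended by zero outside the square;
   this lets us write the action of the shift delta without boundary cases. *)
Definition entry X (i j : nat) : K :=
  if ((i <= n) && (j <= n))%N then X (inord i) (inord j) else 0.

Lemma entry_ord X (i j : 'I_n.+1) : entry X i j = X i j.
Proof. by rewrite /entry -ltnS ltn_ord -ltnS ltn_ord !inord_val. Qed.

Lemma entry_outl X i j : (n < i)%N -> entry X i j = 0.
Proof. by rewrite /entry ltnNge => /negbTE ->. Qed.

Lemma entry_outr X i j : (n < j)%N -> entry X i j = 0.
Proof. by rewrite /entry [(j <= n)%N]leqNgt => ->; rewrite andbF. Qed.

Lemma entry_inj X Y : (forall i j, entry X i j = entry Y i j) -> X = Y.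
Proof.
by move=> XY; apply/matrixP => i j; rewrite -[X i j]entry_ord -[Y i j]entry_ord XY.
Qed.

Lemma entryZ c X i j : entry (c *: X) i j = c * entry X i j.
Proof. by rewrite /entry; case: ifP; rewrite ?mxE ?mulr0. Qed.

Lemma entry0 i j : entry 0 i j = 0.
Proof. by rewrite /entry; case: ifP; rewrite ?mxE. Qed.

Lemma entry_delta i j : (i <= n)%N -> (j <= n)%N -> entry D i j = (i.+1 == j)%:R.
Proof. by move=> hi hj; rewrite /entry hi hj mxE !inordK. Qed.

Lemma mul_delta_mx_entry X (i j : 'I_n.+1) : (D *m X) i j = entry X i.+1 j.
Proof.
rewrite mxE (eq_bigr (fun l : 'I_n.+1 => if (l : nat) == i.+1 then entry X l j else 0)).
  rewrite -big_mkcond /= (big_ord1_eq _ (fun l => entry X l j)).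
  by case: ltnP => // /entry_outl ->.
by move=> l _; rewrite mxE eq_sym entry_ord; case: eqP; rewrite ?mul1r ?mul0r.
Qed.

Lemma mul_mx_delta_entry X (i j : 'I_n.+1) :
  (X *m D) i j = if (j : nat) is j'.+1 then entry X i j' else 0.
Proof.
rewrite mxE; case: j => [[|j] hj] /=.
  by rewrite big1 // => l _; rewrite mxE mulr0.
rewrite (eq_bigr (fun l : 'I_n.+1 => if (l : nat) == j then entry X i l else 0)).
  rewrite -big_mkcond /= (big_ord1_eq _ (fun l => entry X i l)).
  by rewrite (ltn_trans (ltnSn j) hj).
by move=> l _; rewrite mxE eqSS entry_ord; case: eqP; rewrite ?mulr1 ?mulr0.
Qed.

Lemma entry_lbr_delta X i j : (i <= n)%N -> (j <= n)%N ->
  entry (lbr X D) i j = (if j is j'.+1 then entry X i j' else 0) - entry X i.+1 j.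
Proof.
move=> hi hj; rewrite {1}/entry hi hj /= mxBE.
by rewrite mul_mx_delta_entry mul_delta_mx_entry !inordK.
Qed.

Lemma Vdeg_eqE (a b : 'I_n.+1) k :
  (Vdeg r a == Vdeg r b + k) = ((a : nat)%:Z == (b : nat)%:Z + k).
Proof. by rewrite /Vdeg -addrA; apply/eqP/eqP => [/addrI|->]. Qed.

Lemma entry_hom k X i j : ghom k X -> i%:Z != j%:Z + k -> entry X i j = 0.
Proof.
move=> hX hij; rewrite /entry; case: ifP => // /andP[hi hj].
by apply: hX; rewrite Vdeg_eqE !inordK.
Qed.

Lemma ghom0 k : ghom k (0 : gl).
Proof. by move=> a b _; rewrite mxE. Qed.

Lemma ghom_lin k c X Y : ghom k X -> ghom k Y -> ghom k (c *: X + Y).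
Proof. by move=> hX hY a b hab; rewrite !mxE hX // hY // mulr0 addr0. Qed.

Lemma ghom_diag (d : 'rV[K]_n.+1) : ghom 0 (diag_mx d : gl).
Proof.
move=> a b; rewrite Vdeg_eqE addr0 eqz_nat => /negbTE hab.
by rewrite mxE (_ : (a == b) = false) // -(inj_eq val_inj) hab.
Qed.

Lemma ghom_delta : ghom (-1) D.
Proof.
move=> a b; rewrite Vdeg_eqE mxE => /eqP hab.
by case: eqP => // hS; case: hab; lia.
Qed.

Lemma gcompZ k c X : gcomp k (c *: X) = c *: gcomp k X.
Proof. by apply/matrixP => a b; rewrite !mxE; case: ifP; rewrite ?mulr0. Qed.

Lemma gcompD k X Y : gcomp k (X + Y) = gcomp k X + gcomp k Y.
Proof. by apply/matrixP => a b; rewrite !mxE; case: ifP; rewrite ?addr0. Qed.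

Lemma gcomp_hom k l X : ghom l X -> gcomp k X = if k == l then X else 0.
Proof.
move=> hX; apply/matrixP => a b; rewrite mxE.
have [-> | hkl] := eqVneq k l; first by case: ifPn => // /hX ->.
by rewrite mxE; case: ifPn => // /eqP hab; apply: hX; rewrite hab (inj_eq (addrI _)).
Qed.

Lemma gcomp_ext X Y : (forall k, gcomp k X = gcomp k Y) -> X = Y.
Proof.
move=> hXY; apply/matrixP => a b.
have := congr1 (fun M : gl => M a b) (hXY (Vdeg r a - Vdeg r b)).
by rewrite !mxE addrC subrK eqxx.
Qed.

(* The images of the matrix units e11, e22, e12 of gl_2: rho11 = diag(i),
   rho22 = diag(n - i), and rho12 e_j = (j+1)(n-j) e_{j+1} of degree 1.
   Together with delta (the image of e21) they span the action of gl_2 on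
   the binary forms of degree n. *)
Definition rho11 : gl := diag_mx (\row_i (i : nat)%:R).
Definition rho22 : gl := diag_mx (\row_i (n - i)%:R).
Definition rho12 : gl :=
  \matrix_(i, j) (if (i : nat) == j.+1 then (i * (n.+1 - i))%:R else 0).

Lemma ghom_rho11 : ghom 0 rho11. Proof. exact: ghom_diag. Qed.
Lemma ghom_rho22 : ghom 0 rho22. Proof. exact: ghom_diag. Qed.

Lemma rho11_add_rho22 : rho11 + rho22 = (n%:R)%:M.
Proof.
apply/matrixP => i j; rewrite !mxE -mulrnDl -natrD subnKC //.
by rewrite -ltnS ltn_ord.
Qed.

Lemma ghom_rho12 : ghom 1 rho12.
Proof.
move=> a b; rewrite Vdeg_eqE mxE => /eqP hab.
by case: eqP => // hS; case: hab; lia.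
Qed.

Lemma entry_rho12 i j :
  entry rho12 i j = if i == j.+1 then (i * (n.+1 - i))%:R else 0.
Proof.
rewrite /entry; case: ifP => [/andP[hi hj] | hij]; first by rewrite mxE !inordK.
by case: eqP => // eij; rewrite (_ : (n.+1 - i)%N = 0%N) ?muln0 //; lia.
Qed.

Lemma lbr_diag (d : 'rV[K]_n.+1) X :
  lbr (diag_mx d) X = \matrix_(i, j) ((d 0 i - d 0 j) * X i j).
Proof.
rewrite /lbr mul_diag_mx mul_mx_diag; apply/matrixP => i j.
by rewrite mxBE !mxE mulrBl [X i j * _]mulrC.
Qed.

Lemma lbr_rho11_hom k X : ghom k X -> lbr rho11 X = k%:~R *: X.
Proof.
move=> hX; apply/matrixP => i j; rewrite lbr_diag !mxE.
have [hij | hij] := eqVneq (i : nat)%:Z ((j : nat)%:Z + k).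
  rewrite (_ : k = (i : nat)%:Z - (j : nat)%:Z) ?intrB //.
  by rewrite hij addrAC subrr add0r.
by rewrite hX ?mulr0 // Vdeg_eqE.
Qed.

Lemma lbr_rho22_hom k X : ghom k X -> lbr rho22 X = (- k)%:~R *: X.
Proof.
move=> hX; have -> : rho22 = (n%:R)%:M + (-1) *: rho11.
  by rewrite -rho11_add_rho22 scaleN1r addrAC subrr add0r.
by rewrite lbrDl lbr_scalar lbrZl (lbr_rho11_hom hX) scalerA mulN1r -intrN add0r.
Qed.

Lemma lbr_rho12_delta : lbr rho12 D = rho11 - rho22.
Proof.
apply: entry_inj => i j.
have [hi | hi] := leqP i n; last by rewrite !entry_outl.
have [hj | hj] := leqP j n; last by rewrite !entry_outr.
rewrite entry_lbr_delta // {3}/entry hi hj /= mxBE !mxE.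
rewrite -(inj_eq val_inj) /= !inordK //.
have [<- | hij] := eqVneq i j; last first.
  by case: j hj hij => [|j] hj hij /=; rewrite !entry_rho12 eqSS (negbTE hij) !mulr0n.
rewrite /= !mulr1n; case: i hi => [|i] hi /=; rewrite !entry_rho12 eqSS eqxx.
- by rewrite subSS !subn0 mul1n; ring.
- by rewrite !subSS !natrM !natrB ?(ltnW hi) // eqxx; ring.
Qed.

Definition rho (A : 'M[K]_2) : gl :=
  A 0 0 *: rho11 + A 1 1 *: rho22 + A 0 1 *: rho12 + A 1 0 *: D.

Lemma rho_lbr (A B : 'M[K]_2) : rho (lbr A B) = lbr (rho A) (rho B).
Proof.
rewrite /rho !lbrDl !lbrDr !lbrZl !lbrZr !lbrxx.
rewrite [lbr rho22 rho11]lbrC [lbr rho12 rho11]lbrC [lbr D rho11]lbrC.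
rewrite [lbr rho12 rho22]lbrC [lbr D rho22]lbrC [lbr D rho12]lbrC.
rewrite (lbr_rho11_hom ghom_rho22) (lbr_rho11_hom ghom_rho12).
rewrite (lbr_rho11_hom ghom_delta) (lbr_rho22_hom ghom_rho12).
rewrite (lbr_rho22_hom ghom_delta) lbr_rho12_delta !lbr2_entry.
move: rho11 rho22 rho12 D => H1 H2 E F; apply/matrixP => i j; rewrite !mxE /=.
ring.
Qed.

Lemma rho_lin c A B : rho (c *: A + B) = c *: rho A + rho B.
Proof.
rewrite /rho; move: rho11 rho22 rho12 D => H1 H2 E F.
by apply/matrixP => i j; rewrite !mxE; ring.
Qed.

Lemma rho_delta : rho (delta_mx 1 0) = D.
Proof. by rewrite /rho !mxE /= !scale0r !add0r scale1r. Qed.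

Lemma mline_lin c X Y : mline X -> mline Y -> mline (c *: X + Y).
Proof. by case=> a ->; case=> b ->; exists (c * a + b); rewrite scalerDl scalerA. Qed.

Lemma mline_delta : mline D.
Proof. by exists 1; rewrite scale1r. Qed.

Lemma upos_zero k : upos k (0 : gl).
Proof.
elim: k => [|k IH]; split; try exact: ghom0; move=> F _; rewrite lbr0l //.
by exists 0; rewrite scale0r.
Qed.

Lemma upos_lin k c X Y : upos k X -> upos k Y -> upos k (c *: X + Y).
Proof.
elim: k c X Y => [|k IH] c X Y [hX aX] [hY aY]; split; try exact: ghom_lin.
- by move=> F hF; rewrite lbrDl lbrZl; apply: mline_lin; [apply: aX | apply: aY].
- by move=> F hF; rewrite lbrDl lbrZl; apply: IH; [apply: aX | apply: aY].
Qed.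

Lemma upos_add k X Y : upos k X -> upos k Y -> upos k (X + Y).
Proof. by move=> hX hY; have := upos_lin 1 hX hY; rewrite scale1r. Qed.

Lemma upos_scale k c X : upos k X -> upos k (c *: X).
Proof. by move=> hX; have := upos_lin c hX (upos_zero k); rewrite addr0. Qed.

Lemma uk_zero k : uk k (0 : gl).
Proof. by case: k => [k|[|k]] //=; [exact: upos_zero | exists 0; rewrite scale0r]. Qed.

Lemma uk_lin k c X Y : uk k X -> uk k Y -> uk k (c *: X + Y).
Proof.
case: k => [k|[|k]] /=; [exact: upos_lin | exact: mline_lin |].
by move=> -> ->; rewrite scaler0 addr0.
Qed.

Lemma inU_lin c X Y : inU X -> inU Y -> inU (c *: X + Y).
Proof. by move=> hX hY k; rewrite gcompD gcompZ; apply: uk_lin. Qed.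

Lemma inU_hom l X : ghom l X -> uk l X -> inU X.
Proof.
move=> hX uX k; rewrite (gcomp_hom k hX).
by case: eqP => [-> | _]; last exact: uk_zero.
Qed.

Lemma upos_rho11 : upos 0 rho11.
Proof.
split=> [|_ [c ->]]; first exact: ghom_rho11.
by rewrite lbrZr (lbr_rho11_hom ghom_delta) scalerA; eexists.
Qed.

Lemma upos_rho22 : upos 0 rho22.
Proof.
split=> [|_ [c ->]]; first exact: ghom_rho22.
by rewrite lbrZr (lbr_rho22_hom ghom_delta) scalerA; eexists.
Qed.

Lemma upos_rho12 : upos 1 rho12.
Proof.
split=> [|_ [c ->]]; first exact: ghom_rho12.
rewrite lbrZr lbr_rho12_delta; apply: upos_scale.
by rewrite -scaleN1r; apply: upos_add upos_rho11 (upos_scale _ upos_rho22).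
Qed.

Lemma inU_add X Y : inU X -> inU Y -> inU (X + Y).
Proof. by move=> hX hY; have := inU_lin 1 hX hY; rewrite scale1r. Qed.

Lemma inU_scale c X : inU X -> inU (c *: X).
Proof.
move=> hX; have := inU_lin c hX (inU_hom (ghom0 (k := 0)) (uk_zero 0)).
by rewrite addr0.
Qed.

Lemma rho_inU A : inU (rho A).
Proof.
apply: inU_add; [apply: inU_add; [apply: inU_add |] |]; apply: inU_scale.
- exact: inU_hom ghom_rho11 upos_rho11.
- exact: inU_hom ghom_rho22 upos_rho22.
- exact: inU_hom ghom_rho12 upos_rho12.
- exact: inU_hom ghom_delta mline_delta.
Qed.

(* An element of positive degree commuting with delta vanishes: its entries
   are constant along diagonals, and each diagonal leaves the square. *)
Lemma centralizer_delta_pos k X : ghom (k.+1)%:Z X -> lbr X D = 0 -> X = 0.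
Proof.
move=> hX hXD.
have shift i j : entry X i j = entry X i.+1 j.+1.
  have [hi | hi] := leqP i n; last by rewrite !entry_outl // ltnW.
  have [hj | hj] := ltnP j n.
    by apply/eqP; rewrite -subr_eq0 -(entry_lbr_delta X hi hj) hXD entry0.
  rewrite [RHS]entry_outr ?ltnS // (entry_hom hX) //.
  by apply/eqP => /eqP; rewrite -PoszD eqz_nat; lia.
have far t i j : entry X i j = entry X (i + t) (j + t).
  by elim: t => [|t IH]; rewrite ?addn0 // IH shift !addnS.
by apply: entry_inj => i j; rewrite entry0 (far n.+1) entry_outl // ltn_addl.
Qed.

Lemma gcomp_rho k A : gcomp k (rho A) =
  if k == 0 then A 0 0 *: rho11 + A 1 1 *: rho22
  else if k == 1 then A 0 1 *: rho12
  else if k == -1 then A 1 0 *: D else 0.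
Proof.
rewrite /rho !gcompD !gcompZ (gcomp_hom k ghom_rho11) (gcomp_hom k ghom_rho22).
rewrite (gcomp_hom k ghom_rho12) (gcomp_hom k ghom_delta).
by case: k => [[|[|k]]|[|k]] /=; rewrite ?scaler0 ?addr0 ?add0r.
Qed.

Lemma ghom_scalar c : ghom 0 (c%:M : gl).
Proof. by rewrite -diag_const_mx; exact: ghom_diag. Qed.

Lemma rho_scalar a : rho a%:M = (a * n%:R)%:M.
Proof.
rewrite /rho !mxE /= !mulr1n !mulr0n !scale0r !addr0 -scalerDr.
by rewrite rho11_add_rho22 scale_scalar_mx.
Qed.

Hypothesis hK : [pchar K] =i pred0.

Lemma natr_neq0 m : (0 < m)%N -> (m%:R : K) != 0.
Proof. by move=> h; rewrite ((pcharf0P K).1 hK) -lt0n. Qed.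

Hypothesis n_gt0 : (0 < n)%N.

(* u_0 = K rho11 + K rho22: [X, delta] = c delta for a diagonal X means that
   the diagonal of X is an arithmetic progression. *)
Lemma upos0_span X : upos 0 X -> exists p q, X = p *: rho11 + q *: rho22.
Proof.
case=> hX /(_ D mline_delta) [c hc].
set x := entry X 0 0.
have step i : (i < n)%N -> entry X i.+1 i.+1 = entry X i i - c.
  move=> hi; have := congr1 (fun M => entry M i i.+1) hc => /=.
  rewrite entry_lbr_delta ?(ltnW hi) // entryZ entry_delta ?(ltnW hi) //.
  rewrite eqxx mulr1 => <-.
  by rewrite opprB addrC subrK.
have diag i : (i <= n)%N -> entry X i i = x - i%:R * c.
  elim: i => [|i IH] hi; first by rewrite mul0r subr0.
  by rewrite step // IH ?(ltnW hi) // -addn1 natrD; ring.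
have -> : X = x%:M - c *: rho11.
  apply/matrixP => i j; rewrite mxBE !mxE !mulrb.
  have [<- | hij] := eqVneq i j.
    by rewrite -entry_ord (diag _ (leq_ord i)) mulrC.
  by rewrite mulr0 subr0 hX // Vdeg_eqE addr0 eqz_nat.
exists (x / n%:R - c), (x / n%:R).
rewrite scalerBl addrAC -scalerDr rho11_add_rho22 scale_scalar_mx.
by rewrite divfK // natr_neq0.
Qed.

Lemma mxtrace_rho22 : \tr rho22 = \tr rho11.
Proof.
rewrite !mxtrace_diag (reindex_inj rev_ord_inj); apply: eq_bigr => i _.
by rewrite !mxE /= subSS subKn // -ltnS.
Qed.

Lemma mxtrace_rho11_neq0 : \tr rho11 != 0.
Proof.
rewrite mxtrace_diag (eq_bigr (fun i : 'I_n.+1 => (i : nat)%:R)) => [|i _].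
  by rewrite -natr_sum natr_neq0 // big_ord_recr /= addn_gt0 n_gt0 orbT.
by rewrite mxE.
Qed.

Lemma mxtrace_rho12_delta : \tr (rho12 *m D) != 0.
Proof.
rewrite /mxtrace (eq_bigr (fun i : 'I_n.+1 => (i * (n.+1 - i))%:R)) => [|i _].
  rewrite -natr_sum natr_neq0 // big_ord_recr /= subSn // subnn muln1.
  by rewrite addn_gt0 n_gt0 orbT.
rewrite mul_mx_delta_entry.
by case: (nat_of_ord i) => [|i']; rewrite ?mul0n // entry_rho12 eqxx.
Qed.

(* u_1 = K rho12: if [X, delta] = p rho11 + q rho22 then taking traces gives
   q = -p, so X - p rho12 commutes with delta. *)
Lemma upos1_line X : upos 1 X -> exists b, X = b *: rho12.
Proof.
case=> hX /(_ D mline_delta) /upos0_span [p [q hpq]].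
have hqp : q = - p.
  have := mxtrace_lbr X D; rewrite hpq raddfD /= !mxtraceZ mxtrace_rho22 -mulrDl.
  move/eqP; rewrite mulf_eq0 (negbTE mxtrace_rho11_neq0) orbF.
  by rewrite addrC addr_eq0 => /eqP.
exists p; apply/eqP; rewrite -subr_eq0; apply/eqP.
apply: (centralizer_delta_pos (k := 0)).
  by rewrite addrC -scaleNr; apply: ghom_lin ghom_rho12 hX.
rewrite -scaleNr lbrDl lbrZl lbr_rho12_delta hpq hqp.
by move: rho11 rho22 => H1 H2; apply/matrixP => i j; rewrite !mxE; ring.
Qed.

(* u_2 = 0: if [X, delta] = b rho12 then b tr (rho12 delta) = tr ([X, delta] delta)
   vanishes, so b = 0 and X commutes with delta. *)
Lemma upos2_zero X : upos 2 X -> X = 0.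
Proof.
case=> hX /(_ D mline_delta) /upos1_line [b hb].
have b0 : b = 0.
  have := mxtrace_lbr_mulr X D; rewrite hb -scalemxAl mxtraceZ => /eqP.
  by rewrite mulf_eq0 (negbTE mxtrace_rho12_delta) orbF => /eqP.
by apply: (centralizer_delta_pos (k := 1)) hX _; rewrite hb b0 scale0r.
Qed.

Lemma upos_vanish k X : upos k.+2 X -> X = 0.
Proof.
elim: k X => [|k IH] X; first exact: upos2_zero.
case=> hX /(_ D mline_delta) /IH hXD.
exact: (centralizer_delta_pos (k := k.+2)) hX hXD.
Qed.

Lemma inU_rho X : inU X <-> exists A, X = rho A.
Proof.
split=> [hX | [A ->]]; last exact: rho_inU.
have [p [q h0]] := upos0_span (hX 0).
have [b h1] := upos1_line (hX 1).
have [g hm1] : mline (gcomp (-1) X) := hX (-1).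
exists (\matrix_(i, j) if i == 0 then (if j == 0 then p else b)
                      else (if j == 0 then g else q)).
apply: gcomp_ext => k; rewrite gcomp_rho !mxE /=.
case: k => [[|[|k]]|[|k]] //=.
- exact: (upos_vanish (hX k.+2)).
- exact: (hX (Negz k.+1)).
Qed.

(* Four entries of rho A determine A, so rho is injective. *)
Lemma rho_coords A :
  [/\ rho A 0 0 = A 1 1 * n%:R, rho A ord_max ord_max = A 0 0 * n%:R,
      rho A (inord 1) 0 = A 0 1 * n%:R & rho A 0 (inord 1) = A 1 0].
Proof.
have i1 : nat_of_ord (inord 1 : 'I_n.+1) = 1%N by rewrite inordK // ltnS.
have [n_neqS nS_neq] : (n == n.+1) = false /\ (n.+1 == n) = false by split; lia.
rewrite !mxE /= !i1 !eqxx !mulrb /= -!(inj_eq val_inj) /= i1 n_neqS nS_neq /=.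
by split; rewrite ?mulr1n ?subSS ?subn0 ?subnn ?mul1n; ring.
Qed.

Lemma rho_inj : injective rho.
Proof.
move=> A B hAB; have [a00 ann a10 a01] := rho_coords A.
have [b00 bnn b10 b01] := rho_coords B; rewrite -hAB in b00 bnn b10 b01.
have hn := natr_neq0 n_gt0.
apply/matrixP => i j; case: (ord2P i) => ->; case: (ord2P j) => ->.
- by apply: (mulIf hn); rewrite -ann bnn.
- by apply: (mulIf hn); rewrite -a10 b10.
- by rewrite -a01 b01.
- by apply: (mulIf hn); rewrite -a00 b00.
Qed.

Lemma delta_neq0 : D != 0.
Proof.
apply/eqP => /(congr1 (fun M => entry M 0 1)).
by rewrite entry_delta // entry0 => /eqP; rewrite oner_eq0.
Qed.

Lemma nonneg_rho A : inUnonneg (rho A) -> A 1 0 = 0.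
Proof.
case=> _ /(_ (-1) isT) /eqP; rewrite gcomp_rho /= scaler_eq0.
by rewrite (negbTE delta_neq0) orbF => /eqP.
Qed.

Lemma scalar_rho c : c%:M = rho (c / n%:R)%:M.
Proof. by rewrite rho_scalar divfK // natr_neq0. Qed.

Lemma scalars_ideal : is_u_ideal (@scalarsId K r s).
Proof.
split.
- by move=> _ [c ->]; apply/inU_rho; eexists; exact: scalar_rho.
- by exists 0; rewrite raddf0.
- by move=> c _ _ [a ->] [b ->]; exists (c * a + b); rewrite raddfD scale_scalar_mx.
- by move=> X _ _ [c ->]; exists 0; rewrite lbrC lbr_scalar oppr0 raddf0.
Qed.

Lemma scalars_nonneg X : scalarsId X -> inUnonneg X.
Proof.
case=> c ->; split; first by apply/inU_rho; eexists; exact: scalar_rho.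
by move=> k k_lt0; rewrite (gcomp_hom k (ghom_scalar c)) lt_eqF.
Qed.

(* Conversely, any ideal inside the nonnegative part consists of scalars:
   for rho A in it, rho [e21, A] and rho [e21, [e21, A]] are in it too, and
   their e21-coordinates A11 - A22 and -2 A12 must vanish, as does A21. *)
Lemma nonneg_ideal_scalars I : is_u_ideal I ->
  (forall X, I X -> inUnonneg X) -> forall X, I X -> scalarsId X.
Proof.
move=> [I_u _ _ I_br] I_nonneg X IX.
have [A eA] := (inU_rho X).1 (I_u X IX); subst X.
have low B : I (rho B) -> B 1 0 = 0 by move/I_nonneg/nonneg_rho.
have I_e B : I (rho B) -> I (rho (lbr (delta_mx 1 0) B)).
  move=> IB; rewrite rho_lbr rho_delta; apply: I_br IB.
  by apply/inU_rho; exists (delta_mx 1 0); rewrite rho_delta.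
have a10 := low _ IX.
have [e10 e00 e11] := lbr_e21 A.
have := low _ (I_e _ IX); rewrite e10 => /eqP; rewrite subr_eq0 => /eqP a00.
have [f10 _ _] := lbr_e21 (lbr (delta_mx 1 0) A).
have := low _ (I_e _ (I_e _ IX)); rewrite f10 e00 e11 => /eqP.
rewrite -opprD oppr_eq0 -mulr2n -mulr_natr mulf_eq0.
rewrite (negbTE (natr_neq0 (isT : 0 < 2)%N)) orbF => /eqP a01.
exists (A 0 0 * n%:R); rewrite -rho_scalar; congr rho.
by apply/matrixP => i j; case: (ord2P i) => ->; case: (ord2P j) => ->; rewrite !mxE.
Qed.

End Prolongation.

Theorem mainTheorem12 (K : fieldType) (r s : int) :
  [pchar K] =i pred0 -> r < s -> s < 0 ->
  (exists f : 'M[K]_2 -> glM K r s,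
      [/\ forall (c : K) A B, f (c *: A + B) = c *: f A + f B,
          injective f,
          forall X : glM K r s, inU X <-> exists A, X = f A
        & forall A B, f (lbr A B) = lbr (f A) (f B)])
  /\
  [/\ is_u_ideal (@scalarsId K r s),
      (forall X : glM K r s, scalarsId X -> inUnonneg X)
    & forall I : glM K r s -> Prop,
        is_u_ideal I -> (forall X : glM K r s, I X -> inUnonneg X) ->
        forall X : glM K r s, I X -> scalarsId X].
Proof.
move=> hK r_lt_s _.
have n_gt0 : (0 < dimV r s)%N by rewrite /dimV; lia.
split.
  exists (@rho K r s); split.
  - exact: rho_lin.
  - exact: rho_inj hK n_gt0.
  - exact: inU_rho hK n_gt0.
  - exact: rho_lbr.
split.
- exact: scalars_ideal hK n_gt0.
- exact: scalars_nonneg hK n_gt0.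
- exact: nonneg_ideal_scalars hK n_gt0.
Qed.
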